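(* Let $G=(V,E)$ be a finite simple undirected graph, $G_0:=G$, and let $W_1,\dots,W_r$ be distinct subsets of $V$ such that for every $t\in\{1,\dots,r\}$, $W_t$ is a clique of $G_{t-1}$ with $|W_t|\ge2$ and $G_t:=G_{t-1}\mid W_t$. Let $W_{r+1}\subseteq V$ be a clique of $G_r$. For $t=r,r-1,\dots,1$ define recursively $P_t:=\{x\in STAB(G_{t-1})\mid x_{W_t}=0\}$ and \[ \lambda^B_t:=\max\Big\{x_{W_{r+1}}+\sum_{i=t+1}^r\lambda^B_i(x_{W_i}-1)\ \Big|\ x\in P_t\Big\}-1 . \] Then the inequality \[ x_{W_{r+1}}+\sum_{t=1}^r\lambda^B_t(x_{W_t}-1)\le 1 \] is valid for $STAB(G)$.
   Context: For a graph $G=(V,E)$, $\mathcal S(G)\subseteq\{0,1\}^V$ is the set of characteristic vectors of stable sets of $G$, and $STAB(G)=\mathrm{conv}\,\mathcal S(G)$. For $W\subseteq V$ and $x\in\mathbb R^V$, $x_W=\sum_{v\in W}x_v$. $N(v)$ is the neighborhood of $v$. The clique projection of a clique $W$ ($|W|\ge2$) of a graph $H=(V,E_H)$ is $H\mid W=(V,E_H\cup\{uv\notin E_H\mid u\ne v,\ W\subseteq N_H(u)\cup N_H(v)\})$. An inequality is valid for a set if every point of the set satisfies it. *)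

From mathcomp Require Import all_boot all_order all_algebra.
Set Implicit Arguments. Unset Strict Implicit. Unset Printing Implicit Defensive.
Import Order.TTheory GRing.Theory Num.Theory.
Local Open Scope ring_scope.

Definition simple_graph (V : finType) (e : rel V) : Prop :=
  (forall u v, e u v = e v u) /\ (forall u, ~~ e u u).

Definition nbhd (V : finType) (e : rel V) (v : V) : {set V} := [set w | e v w].

Definition clique (V : finType) (e : rel V) (W : {set V}) : Prop :=
  forall u v, u \in W -> v \in W -> u != v -> e u v.

Definition stable (V : finType) (e : rel V) (S : {set V}) : Prop :=
  forall u v, u \in S -> v \in S -> ~~ e u v.

Definition clique_proj (V : finType) (e : rel V) (W : {set V}) : rel V :=
  fun u v => e u v || ((u != v) && (W \subset nbhd e u :|: nbhd e v)).

Definition xsum (R : numDomainType) (V : finType) (x : V -> R) (W : {set V}) : R :=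
  \sum_(v in W) x v.

Definition chi (R : numDomainType) (V : finType) (S : {set V}) : V -> R :=
  fun v => if v \in S then 1 else 0.

Definition inSTAB (R : numDomainType) (V : finType) (e : rel V) (x : V -> R) : Prop :=
  exists c : {set V} -> R,
    (forall S, 0 <= c S) /\ (\sum_(S : {set V}) c S = 1) /\
    (forall S, c S != 0 -> stable e S) /\
    (forall v, x v = \sum_(S : {set V}) c S * chi R S v).

Fixpoint gseq (V : finType) (e : rel V) (W : nat -> {set V}) (t : nat) : rel V :=
  match t with
  | 0 => e
  | t'.+1 => clique_proj (gseq e W t') (W t'.+1)
  end.

Definition is_max (R : numDomainType) (T : Type) (P : T -> Prop) (f : T -> R) (m : R) : Prop :=
  (exists2 x, P x & f x = m) /\ (forall x, P x -> f x <= m).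

From mathcomp Require Import all_boot all_order all_algebra.
From mathcomp Require Import lra zify.
Import Order.TTheory GRing.Theory Num.Theory.
Set Implicit Arguments. Unset Strict Implicit.
Local Open Scope ring_scope.

(* The left-hand side is affine in x, so it suffices to bound it at the
   characteristic vectors of stable sets of G_0.  This is done by downward
   induction on t for stable sets of G_t: a stable set S of G_{t-1} either
   misses the clique W_t, and then the definition of lam_t as a maximum over
   P_t pays for the term lam_t (x_{W_t} - 1) = -lam_t, or meets W_t, and then
   S is still stable in G_t = G_{t-1} | W_t while the term vanishes. *)

Section StableSets.
Variables (R : realFieldType) (V : finType).

Lemma xsum_chi (S W : {set V}) : xsum (chi R S) W = #|W :&: S|%:R.
Proof.
rewrite /xsum /chi -big_mkcondr /= -sum1_card natr_sum.
by apply: eq_bigl => v; rewrite inE.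
Qed.

Lemma clique_stable_meet (g : rel V) (W S : {set V}) :
  clique g W -> stable g S -> (#|W :&: S| <= 1)%N.
Proof.
move=> cW sS; apply/card_le1_eqP => u v /setIP[uW uS] /setIP[vW vS].
apply/eqP/negPn/negP; rewrite eq_sym => uv.
by move: (sS _ _ uS vS); rewrite (cW _ _ uW vW uv).
Qed.

Lemma stable_clique_proj (g : rel V) (W S : {set V}) w :
  stable g S -> w \in W :&: S -> stable (clique_proj g W) S.
Proof.
move=> sS /setIP[wW wS] u v uS vS; rewrite /clique_proj negb_or sS //=.
apply/negP => /andP[_ /subsetP /(_ w wW)].
by rewrite in_setU !inE (negbTE (sS _ _ uS wS)) (negbTE (sS _ _ vS wS)).
Qed.

Lemma inSTAB_chi (g : rel V) (S : {set V}) : stable g S -> inSTAB g (chi R S).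
Proof.
move=> sS; exists (fun T => if T == S then 1 else 0); split; [|split; [|split]].
- by move=> T; case: ifP.
- by rewrite (bigD1 S) //= eqxx big1 ?addr0 // => T /negbTE ->.
- by move=> T; have [->|_] := eqVneq T S; last rewrite eqxx.
- move=> v; rewrite (bigD1 S) //= eqxx mul1r big1 ?addr0 // => T /negbTE ->.
  by rewrite mul0r.
Qed.

Lemma xsum_conv (c : {set V} -> R) (x : V -> R) (W : {set V}) :
  (forall v, x v = \sum_(S : {set V}) c S * chi R S v) ->
  xsum x W = \sum_(S : {set V}) c S * xsum (chi R S) W.
Proof.
move=> Hx; rewrite /xsum; under eq_bigr => v _ do rewrite Hx.
by rewrite exchange_big; apply: eq_bigr => S _; rewrite mulr_sumr.
Qed.

Lemma xsum_conv_subr1 (c : {set V} -> R) (x : V -> R) (W : {set V}) :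
  (forall v, x v = \sum_(S : {set V}) c S * chi R S v) ->
  \sum_(S : {set V}) c S = 1 ->
  xsum x W - 1 = \sum_(S : {set V}) c S * (xsum (chi R S) W - 1).
Proof.
move=> Hx Hc; rewrite (xsum_conv _ Hx).
under [RHS]eq_bigr => S _ do rewrite mulrBr mulr1.
by rewrite sumrB Hc.
Qed.

End StableSets.

Section CliqueProjections.
Variables (R : realFieldType) (V : finType) (e : rel V) (r : nat).
Variables (W : nat -> {set V}) (lam : nat -> R).

Definition tail_form (t : nat) (x : V -> R) : R :=
  xsum x (W r.+1) + \sum_(t.+1 <= i < r.+1) lam i * (xsum x (W i) - 1).

Lemma tail_formS t x : (t < r)%N ->
  tail_form t x = tail_form t.+1 x + lam t.+1 * (xsum x (W t.+1) - 1).
Proof.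
move=> ltr; rewrite /tail_form big_ltn ?ltnS //.
by rewrite [lam _ * _ + _]addrC addrA.
Qed.

Lemma tail_form_conv (c : {set V} -> R) (x : V -> R) t :
  (forall v, x v = \sum_(S : {set V}) c S * chi R S v) ->
  \sum_(S : {set V}) c S = 1 ->
  tail_form t x = \sum_(S : {set V}) c S * tail_form t (chi R S).
Proof.
move=> Hx Hc; rewrite /tail_form.
under [RHS]eq_bigr => S _ do rewrite mulrDr mulr_sumr.
rewrite big_split /= -(xsum_conv _ Hx); congr (_ + _).
rewrite [RHS]exchange_big; apply: eq_bigr => i _.
rewrite (xsum_conv_subr1 _ Hx Hc) mulr_sumr; apply: eq_bigr => S _.
by rewrite mulrCA.
Qed.

Hypothesis clique_W : forall t, (1 <= t <= r)%N -> clique (gseq e W t.-1) (W t).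
Hypothesis clique_last : clique (gseq e W r) (W r.+1).
Hypothesis lam_ub : forall t, (1 <= t <= r)%N -> forall x,
  inSTAB (gseq e W t.-1) x -> xsum x (W t) = 0 -> tail_form t x <= lam t + 1.

Lemma tail_form_chi_last S : stable (gseq e W r) S -> tail_form r (chi R S) <= 1.
Proof.
move=> sS; rewrite /tail_form big_geq // addr0 xsum_chi.
by rewrite lern1; apply: clique_stable_meet sS.
Qed.

Lemma tail_form_chi_step t : (t < r)%N ->
  (forall S, stable (gseq e W t.+1) S -> tail_form t.+1 (chi R S) <= 1) ->
  forall S, stable (gseq e W t) S -> tail_form t (chi R S) <= 1.
Proof.
move=> ltr IH S sS; rewrite tail_formS //.
have rangeS : (1 <= t.+1 <= r)%N by [].
have := clique_stable_meet (clique_W rangeS) sS.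
rewrite leq_eqVlt ltnS leqn0 => /orP[/eqP meet1 | /eqP meet0].
- have [w Sw] : exists w, w \in W t.+1 :&: S.
    by apply/set0Pn; rewrite -card_gt0 meet1.
  rewrite xsum_chi meet1 subrr mulr0 addr0; apply: IH.
  exact: stable_clique_proj sS Sw.
- have miss : xsum (chi R S) (W t.+1) = 0 by rewrite xsum_chi meet0.
  have := lam_ub rangeS (inSTAB_chi R sS) miss.
  by rewrite miss; lra.
Qed.

Lemma tail_form_chi_le1 t S : (t <= r)%N ->
  stable (gseq e W t) S -> tail_form t (chi R S) <= 1.
Proof.
move=> ler; rewrite -(subKn ler).
elim: (r - t)%N (leq_subr t r) S => [|k IH] kr S.
  by rewrite subn0; apply: tail_form_chi_last.
apply: tail_form_chi_step => [|S']; first lia.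
by rewrite (_ : (r - k.+1).+1 = r - k)%N; [apply: IH; lia | lia].
Qed.

End CliqueProjections.

Theorem lemma4 (R : realFieldType) (V : finType) (e : rel V) (r : nat)
    (W : nat -> {set V}) (lam : nat -> R) :
  simple_graph e ->
  (forall s t, (1 <= s <= r)%N -> (1 <= t <= r)%N -> s != t -> W s != W t) ->
  (forall t, (1 <= t <= r)%N ->
     clique (gseq e W t.-1) (W t) /\ (2 <= #|W t|)%N) ->
  clique (gseq e W r) (W r.+1) ->
  (forall t, (1 <= t <= r)%N ->
     is_max (fun x : V -> R => inSTAB (gseq e W t.-1) x /\ xsum x (W t) = 0)
       (fun x => xsum x (W r.+1) +
                 \sum_(t.+1 <= i < r.+1) lam i * (xsum x (W i) - 1))
       (lam t + 1)) ->
  forall x : V -> R, inSTAB e x ->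
    xsum x (W r.+1) + \sum_(1 <= t < r.+1) lam t * (xsum x (W t) - 1) <= 1.
Proof.
move=> _ _ cliques clique_last lam_max x [c [c_ge0 [c_sum1 [c_stable Hx]]]].
have lam_ub t : (1 <= t <= r)%N -> forall y, inSTAB (gseq e W t.-1) y ->
    xsum y (W t) = 0 -> tail_form r W lam t y <= lam t + 1.
  by move=> rt y Sy Wy; case: (lam_max t rt) => _; apply.
have clique_W t : (1 <= t <= r)%N -> clique (gseq e W t.-1) (W t).
  by move=> /cliques[].
have vertex_le1 S : c S != 0 -> tail_form r W lam 0 (chi R S) <= 1.
  by move=> /c_stable; apply: (tail_form_chi_le1 clique_W clique_last lam_ub (t := 0)).
rewrite -/(tail_form r W lam 0 x) (tail_form_conv _ _ _ _ Hx c_sum1).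
rewrite -[X in _ <= X]c_sum1; apply: ler_sum => S _.
have [->|/vertex_le1 le1] := eqVneq (c S) 0; first by rewrite !mul0r.
by rewrite -[X in _ <= X]mulr1 ler_wpM2l.
Qed.
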